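(* Let $(A,\mu,\Delta,\alpha,\beta,\psi,\omega)$ be an infinitesimal BiHom-bialgebra (with $\mu(a\otimes b)=a\cdot b$). Define left and right actions of $A$ on $A\otimes A$ by $a\cdot(b\otimes c)=\omega(a)\cdot b\otimes\beta(c)$ and $(b\otimes c)\cdot a=\alpha(b)\otimes c\cdot\psi(a)$ for $a,b,c\in A$. Then $(A\otimes A,\alpha\otimes\alpha,\beta\otimes\beta)$ with these actions is an $A$-bimodule, and $\Delta$ is a derivation of $A$ with values in it, i.e. $\Delta(a\cdot b)=a\cdot\Delta(b)+\Delta(a)\cdot b$ for all $a,b\in A$.
   Context: Work over a field. A BiHom-associative algebra is a 4-tuple $(A,\mu,\alpha,\beta)$ with $\alpha,\beta$ commuting linear maps, multiplicative for $\mu$, and $\alpha(x)\cdot(y\cdot z)=(x\cdot y)\cdot\beta(z)$. A BiHom-coassociative coalgebra is $(C,\Delta,\psi,\omega)$ with $\psi\omega=\omega\psi$, $(\psi\otimes\psi)\Delta=\Delta\psi$, $(\omega\otimes\omega)\Delta=\Delta\omega$ and $(\Delta\otimes\psi)\Delta=(\omega\otimes\Delta)\Delta$. An infinitesimal BiHom-bialgebra is a 7-tuple $(A,\mu,\Delta,\alpha,\beta,\psi,\omega)$ with $(A,\mu,\alpha,\beta)$ BiHom-associative, $(A,\Delta,\psi,\omega)$ BiHom-coassociative, and for all $a,b$ (with $\Delta(a)=a_1\otimes a_2$): $\Delta(a\cdot b)=\omega(a)\cdot b_1\otimes\beta(b_2)+\alpha(a_1)\otimes a_2\cdot\psi(b)$;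 $\alpha\psi=\psi\alpha$, $\alpha\omega=\omega\alpha$, $\beta\psi=\psi\beta$, $\beta\omega=\omega\beta$; $(\alpha\otimes\alpha)\Delta=\Delta\alpha$, $(\beta\otimes\beta)\Delta=\Delta\beta$; $\psi,\omega$ multiplicative. For a BiHom-associative algebra $(A,\mu,\alpha,\beta)$ and $(M,\alpha_M,\beta_M)$ with commuting linear $\alpha_M,\beta_M$: $M$ is a left $A$-module via $a\otimes m\mapsto a\cdot m$ if $\alpha_M(a\cdot m)=\alpha(a)\cdot\alpha_M(m)$, $\beta_M(a\cdot m)=\beta(a)\cdot\beta_M(m)$, $\alpha(a)\cdot(a'\cdot m)=(a\cdot a')\cdot\beta_M(m)$; a right $A$-module via $m\otimes a\mapsto m\cdot a$ if $\alpha_M(m\cdot a)=\alpha_M(m)\cdot\alpha(a)$, $\beta_M(m\cdot a)=\beta_M(m)\cdot\beta(a)$, $\alpha_M(m)\cdot(a\cdot a')=(m\cdot a)\cdot\beta(a')$; an $A$-bimodule if both and $\alpha(a)\cdot(m\cdot a')=(a\cdot m)\cdot\beta(a')$. *)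

(* Tensor products are not in the library: we axiomatise a tensor product of
   two K-vector spaces by its universal property (as a record of data), and
   define the tensor product f (x) g of two maps by the defining property
   (f (x) g)(x (x) y) = f x (x) g y of a linear map. *)
From HB Require Import structures.
From mathcomp Require Import all_boot all_algebra.
From Stdlib Require Import ClassicalEpsilon.
Set Implicit Arguments. Unset Strict Implicit. Unset Printing Implicit Defensive.
Import GRing.Theory.
Local Open Scope ring_scope.

Section Tensor.
Variable K : fieldType.

Definition bilinear_map (U V W : lmodType K) (f : U -> V -> W) : Prop :=
  (forall u, linear (f u)) /\ (forall v, linear (fun u => f u v)).

Record tensor (U V : lmodType K) := Tensor {
  tsort :> lmodType K;
  tens : U -> V -> tsort;
  tens_bilinear : bilinear_map tens;
  tens_universal : forall (W : lmodType K) (f : U -> V -> W), bilinear_map f ->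
    exists h : tsort -> W, [/\ linear h, (forall u v, h (tens u v) = f u v) &
      forall h' : tsort -> W, linear h' -> (forall u v, h' (tens u v) = f u v) ->
        forall t, h' t = h t]
}.

Definition tmap (U1 V1 U2 V2 : lmodType K) (S : tensor U1 V1) (S' : tensor U2 V2)
  (f : U1 -> U2) (g : V1 -> V2) : S -> S' :=
  epsilon (inhabits (fun _ => 0))
    (fun h : S -> S' => linear h /\ forall u v, h (tens S u v) = tens S' (f u) (g v)).


Arguments tmap {U1 V1 U2 V2} S S' f g _.

Definition tassoc (U V W : lmodType K) (SUV : tensor U V) (SVW : tensor V W)
  (Sl : tensor SUV W) (Sr : tensor U SVW) : Sr -> Sl :=
  epsilon (inhabits (fun _ => 0))
    (fun h : Sr -> Sl => linear h /\ forall u v w,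
       h (tens Sr u (tens SVW v w)) = tens Sl (tens SUV u v) w).


Arguments tassoc {U V W SUV SVW} Sl Sr _.

Variable A : lmodType K.

Definition bihom_assoc (mul : A -> A -> A) (alpha beta : A -> A) : Prop :=
  [/\ [/\ bilinear_map mul, linear alpha & linear beta],
      forall x, alpha (beta x) = beta (alpha x),
      forall x y, alpha (mul x y) = mul (alpha x) (alpha y),
      forall x y, beta (mul x y) = mul (beta x) (beta y) &
      forall x y z, mul (alpha x) (mul y z) = mul (mul x y) (beta z)].

Definition bihom_coassoc (T2 : tensor A A) (T3l : tensor T2 A) (T3r : tensor A T2)
  (Delta : A -> T2) (psi omega : A -> A) : Prop :=
  [/\ [/\ linear Delta, linear psi & linear omega],
      forall x, psi (omega x) = omega (psi x),
      forall x, tmap T2 T2 psi psi (Delta x) = Delta (psi x),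
      forall x, tmap T2 T2 omega omega (Delta x) = Delta (omega x) &
      forall x, tmap T2 T3l Delta psi (Delta x)
                = tassoc T3l T3r (tmap T2 T3r omega Delta (Delta x))].

Definition mult_map (mul : A -> A -> A) (f : A -> A) :=
  forall x y, f (mul x y) = mul (f x) (f y).

Definition inf_bihom_bialg (T2 : tensor A A) (T3l : tensor T2 A) (T3r : tensor A T2)
  (mul : A -> A -> A) (Delta : A -> T2) (alpha beta psi omega : A -> A) : Prop :=
  [/\ bihom_assoc mul alpha beta /\
      bihom_coassoc T3l T3r Delta psi omega,
      forall a b, Delta (mul a b) =
        tmap T2 T2 (mul (omega a)) beta (Delta b)
        + tmap T2 T2 alpha (fun y => mul y (psi b)) (Delta a),
      [/\ forall x, alpha (psi x) = psi (alpha x),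
          forall x, alpha (omega x) = omega (alpha x),
          forall x, beta (psi x) = psi (beta x) &
          forall x, beta (omega x) = omega (beta x)],
      (forall x, tmap T2 T2 alpha alpha (Delta x) = Delta (alpha x)) /\
      (forall x, tmap T2 T2 beta beta (Delta x) = Delta (beta x)) &
      mult_map mul psi /\ mult_map mul omega].

(* modules over a BiHom-associative algebra (A, mu, alpha, beta);
   the action A (x) M -> M (resp. M (x) A -> M) is a linear map, i.e. a
   bilinear map on A * M. *)
Definition left_module (mul : A -> A -> A) (alpha beta : A -> A)
  (M : lmodType K) (alphaM betaM : M -> M) (act : A -> M -> M) : Prop :=
  [/\ [/\ bilinear_map act, linear alphaM & linear betaM],
      forall m, alphaM (betaM m) = betaM (alphaM m),
      forall a m, alphaM (act a m) = act (alpha a) (alphaM m),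
      forall a m, betaM (act a m) = act (beta a) (betaM m) &
      forall a a' m, act (alpha a) (act a' m) = act (mul a a') (betaM m)].

Definition right_module (mul : A -> A -> A) (alpha beta : A -> A)
  (M : lmodType K) (alphaM betaM : M -> M) (act : M -> A -> M) : Prop :=
  [/\ [/\ bilinear_map act, linear alphaM & linear betaM],
      forall m, alphaM (betaM m) = betaM (alphaM m),
      forall m a, alphaM (act m a) = act (alphaM m) (alpha a),
      forall m a, betaM (act m a) = act (betaM m) (beta a) &
      forall m a a', act (alphaM m) (mul a a') = act (act m a) (beta a')].

Definition bimodule (mul : A -> A -> A) (alpha beta : A -> A)
  (M : lmodType K) (alphaM betaM : M -> M)
  (lact : A -> M -> M) (ract : M -> A -> M) : Prop :=
  [/\ left_module mul alpha beta alphaM betaM lact,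
      right_module mul alpha beta alphaM betaM ract &
      forall a m a', lact (alpha a) (ract m a') = ract (lact a m) (beta a')].

End Tensor.

Arguments tmap {K U1 V1 U2 V2} S S' f g _.
Arguments tassoc {K U V W SUV SVW} Sl Sr _.

(* Every module axiom for A (x) A is an equation between two composites of maps
   of the form f (x) g.  Such composites are again of this form, and two maps
   f (x) g agree as soon as their factors agree pointwise, so each axiom reduces
   to an identity in A on one tensor factor: BiHom-associativity together with
   the commutation and multiplicativity of the structure maps.  The derivation
   property is the compatibility condition of the infinitesimal bialgebra. *)
From mathcomp Require Import all_boot all_algebra.
From Stdlib Require Import ClassicalEpsilon.
Set Implicit Arguments. Unset Strict Implicit. Unset Printing Implicit Defensive.
Import GRing.Theory.
Local Open Scope ring_scope.

Section LinearMaps.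
Variable K : fieldType.
Implicit Types U V W : lmodType K.

Lemma linear_comp U V W (f : V -> W) (g : U -> V) :
  linear f -> linear g -> linear (f \o g).
Proof. by move=> Lf Lg k u v /=; rewrite Lg Lf. Qed.

Lemma linear_comb U V (h1 h2 : U -> V) (k : K) :
  linear h1 -> linear h2 -> linear (fun t => k *: h1 t + h2 t).
Proof.
move=> L1 L2 a u v; rewrite L1 L2 !scalerDr !scalerA mulrC -!addrA.
by congr (_ + _); rewrite addrCA.
Qed.

End LinearMaps.

Section TensorMaps.
Variable K : fieldType.
Implicit Types U V W X : lmodType K.

Lemma tens_ext U V W (S : tensor U V) (h1 h2 : S -> W) :
  linear h1 -> linear h2 -> (forall u v, h1 (tens S u v) = h2 (tens S u v)) ->
  h1 =1 h2.
Proof.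
move=> L1 L2 E t; have [tensl tensr] := tens_bilinear S.
have bil : bilinear_map (fun u v => h1 (tens S u v)).
  by split=> [u|v] a x y /=; rewrite ?tensl ?tensr L1.
have [h0 [_ _ uniq_h0]] := tens_universal S bil.
by rewrite (uniq_h0 h1 L1) // (uniq_h0 h2 L2) // => u v; rewrite E.
Qed.

Section Tmap.
Variables (U1 V1 U2 V2 : lmodType K) (S : tensor U1 V1) (S' : tensor U2 V2).
Variables (f : U1 -> U2) (g : V1 -> V2).
Hypotheses (f_linear : linear f) (g_linear : linear g).

Lemma tmap_spec :
  linear (tmap S S' f g) /\ forall u v, tmap S S' f g (tens S u v) = tens S' (f u) (g v).
Proof.
apply: (epsilon_spec (inhabits (fun _ => 0))
  (fun h : S -> S' => linear h /\ forall u v, h (tens S u v) = tens S' (f u) (g v))).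
have [tensl tensr] := tens_bilinear S'.
have bil : bilinear_map (fun u v => tens S' (f u) (g v)).
  by split=> [u|v] a x y /=; rewrite ?g_linear ?tensl ?f_linear ?tensr.
by have [h [Lh Eh _]] := tens_universal S bil; exists h.
Qed.

Lemma tmap_linear : linear (tmap S S' f g).
Proof. by case: tmap_spec. Qed.

Lemma tmapE u v : tmap S S' f g (tens S u v) = tens S' (f u) (g v).
Proof. by case: tmap_spec. Qed.

End Tmap.

Lemma eq_tmap_comp U1 V1 U2 V2 U2' V2' U3 V3
    (S1 : tensor U1 V1) (S2 : tensor U2 V2) (S2' : tensor U2' V2') (S3 : tensor U3 V3)
    (f1 : U2 -> U3) (f2 : U1 -> U2) (f3 : U2' -> U3) (f4 : U1 -> U2')
    (g1 : V2 -> V3) (g2 : V1 -> V2) (g3 : V2' -> V3) (g4 : V1 -> V2') :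
  linear f1 -> linear f2 -> linear f3 -> linear f4 ->
  linear g1 -> linear g2 -> linear g3 -> linear g4 ->
  (forall u, f1 (f2 u) = f3 (f4 u)) -> (forall v, g1 (g2 v) = g3 (g4 v)) ->
  tmap S2 S3 f1 g1 \o tmap S1 S2 f2 g2 =1 tmap S2' S3 f3 g3 \o tmap S1 S2' f4 g4.
Proof.
move=> Lf1 Lf2 Lf3 Lf4 Lg1 Lg2 Lg3 Lg4 Ef Eg.
apply: tens_ext; try apply: linear_comp; try exact: tmap_linear.
by move=> u v /=; rewrite !tmapE // Ef Eg.
Qed.

Lemma tmap_linear_l X U1 V1 U2 V2 (S : tensor U1 V1) (S' : tensor U2 V2)
    (F : X -> U1 -> U2) (g : V1 -> V2) :
  (forall x, linear (F x)) -> (forall u, linear (F^~ u)) -> linear g ->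
  forall t, linear (fun x => tmap S S' (F x) g t).
Proof.
move=> LF LFu Lg t k x y; have [_ tensr] := tens_bilinear S'.
move: t; apply: tens_ext; first exact: tmap_linear.
  by apply: linear_comb; exact: tmap_linear.
by move=> u v; rewrite !tmapE // LFu tensr.
Qed.

Lemma tmap_linear_r X U1 V1 U2 V2 (S : tensor U1 V1) (S' : tensor U2 V2)
    (f : U1 -> U2) (G : X -> V1 -> V2) :
  linear f -> (forall x, linear (G x)) -> (forall v, linear (G^~ v)) ->
  forall t, linear (fun x => tmap S S' f (G x) t).
Proof.
move=> Lf LG LGv t k x y; have [tensl _] := tens_bilinear S'.
move: t; apply: tens_ext; first exact: tmap_linear.
  by apply: linear_comb; exact: tmap_linear.
by move=> u v; rewrite !tmapE // LGv tensl.
Qed.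

End TensorMaps.

Section TensorSquareBimodule.
Variables (K : fieldType) (A : lmodType K) (T2 : tensor A A).
Variables (mul : A -> A -> A) (alpha beta psi omega : A -> A).
Hypotheses (mul_linear_l : forall u, linear (mul u))
           (mul_linear_r : forall v, linear (mul^~ v)).
Hypotheses (alpha_linear : linear alpha) (beta_linear : linear beta)
           (psi_linear : linear psi) (omega_linear : linear omega).
Hypotheses (alpha_beta : forall x, alpha (beta x) = beta (alpha x))
           (alpha_mul : mult_map mul alpha) (beta_mul : mult_map mul beta)
           (psi_mul : mult_map mul psi) (omega_mul : mult_map mul omega)
           (mul_bihom_assoc : forall x y z, mul (alpha x) (mul y z) = mul (mul x y) (beta z)).
Hypotheses (alpha_psi : forall x, alpha (psi x) = psi (alpha x))
           (alpha_omega : forall x, alpha (omega x) = omega (alpha x))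
           (beta_psi : forall x, beta (psi x) = psi (beta x))
           (beta_omega : forall x, beta (omega x) = omega (beta x)).

(* Lets [//] close both the linearity side conditions of [eq_tmap_comp] and its
   factor identities when these are just [alpha \o beta = beta \o alpha]. *)
Local Hint Resolve mul_linear_l mul_linear_r alpha_linear beta_linear alpha_beta : core.

Definition tensor_lact (a : A) (t : T2) : T2 := tmap T2 T2 (mul (omega a)) beta t.
Definition tensor_ract (t : T2) (a : A) : T2 := tmap T2 T2 alpha (mul^~ (psi a)) t.

Lemma tmap_alpha_beta_comm :
  tmap T2 T2 alpha alpha \o tmap T2 T2 beta beta =1
  tmap T2 T2 beta beta \o tmap T2 T2 alpha alpha.
Proof. exact: eq_tmap_comp. Qed.

Lemma tensor_lact_bilinear : bilinear_map tensor_lact.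
Proof.
split=> [a|t]; first exact: tmap_linear.
apply: tmap_linear_l => // u; exact: linear_comp (mul_linear_r u) omega_linear.
Qed.

Lemma tensor_ract_bilinear : bilinear_map tensor_ract.
Proof.
split=> [t|a]; last exact: tmap_linear.
apply: tmap_linear_r => // v; exact: linear_comp (mul_linear_l v) psi_linear.
Qed.

Lemma tensor_square_left_module :
  left_module mul alpha beta (tmap T2 T2 alpha alpha) (tmap T2 T2 beta beta) tensor_lact.
Proof.
split.
- by split; [exact: tensor_lact_bilinear | exact: tmap_linear ..].
- exact: tmap_alpha_beta_comm.
- by move=> a; apply: eq_tmap_comp => // x /=; rewrite alpha_mul alpha_omega.
- by move=> a; apply: eq_tmap_comp => // x /=; rewrite beta_mul beta_omega.
- move=> a a'; apply: eq_tmap_comp => // x /=.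
  by rewrite omega_mul -alpha_omega mul_bihom_assoc.
Qed.

Lemma tensor_square_right_module :
  right_module mul alpha beta (tmap T2 T2 alpha alpha) (tmap T2 T2 beta beta) tensor_ract.
Proof.
split.
- by split; [exact: tensor_ract_bilinear | exact: tmap_linear ..].
- exact: tmap_alpha_beta_comm.
- by move=> t a; move: t; apply: eq_tmap_comp => // x /=; rewrite alpha_mul alpha_psi.
- by move=> t a; move: t; apply: eq_tmap_comp => // x /=; rewrite beta_mul beta_psi.
- move=> t a a'; move: t; apply: eq_tmap_comp => // x /=.
  by rewrite psi_mul -beta_psi mul_bihom_assoc.
Qed.

Lemma tensor_square_bimodule :
  bimodule mul alpha beta (tmap T2 T2 alpha alpha) (tmap T2 T2 beta beta)
    tensor_lact tensor_ract.
Proof.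
split; [exact: tensor_square_left_module | exact: tensor_square_right_module |].
move=> a t a'; move: t; apply: eq_tmap_comp => // x /=.
  by rewrite alpha_mul alpha_omega.
by rewrite beta_mul beta_psi.
Qed.

End TensorSquareBimodule.

Theorem lemma4p2 (K : fieldType) (A : lmodType K) (T2 : tensor A A)
  (T3l : tensor T2 A) (T3r : tensor A T2)
  (mul : A -> A -> A) (Delta : A -> T2) (alpha beta psi omega : A -> A) :
  inf_bihom_bialg T3l T3r mul Delta alpha beta psi omega ->
  let lact := fun (a : A) (t : T2) => tmap T2 T2 (mul (omega a)) beta t in
  let ract := fun (t : T2) (a : A) => tmap T2 T2 alpha (fun y => mul y (psi a)) t in
  bimodule mul alpha beta (tmap T2 T2 alpha alpha) (tmap T2 T2 beta beta) lact ract /\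
  (forall a b, Delta (mul a b) = lact a (Delta b) + ract (Delta a) b).
Proof.
move=> [[assoc coassoc] Delta_mul maps_comm _ [psi_mul omega_mul]] lact ract.
have [[[mul_l mul_r] La Lb] alpha_beta alpha_mul beta_mul mul_assoc] := assoc.
have [[_ Lpsi Lomega] _ _ _ _] := coassoc.
have [alpha_psi alpha_omega beta_psi beta_omega] := maps_comm.
split; last exact: Delta_mul.
exact: (tensor_square_bimodule T2 mul_l mul_r La Lb Lpsi Lomega alpha_beta alpha_mul
  beta_mul psi_mul omega_mul mul_assoc alpha_psi alpha_omega beta_psi beta_omega).
Qed.
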